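(* Fix $\lambda>0$ and let $M_\lambda$ be as in the context. Then for all $x\ge3$, \[ \inf_{x-1\le t\le x}M'_\lambda(t)\le\inf_{x\le t\le x+1}M'_\lambda(t)\le \sup_{x\le t\le x+1}M'_\lambda(t)\le \sup_{x-1\le t\le x}M'_\lambda(t). \]
   Context: For $\lambda>0$, $M_\lambda:[0,\infty)\to\mathbb R$ is defined by $M_\lambda(x)=0$ for $0\le x\le1$ and, for all $x>0$, $M_{\lambda}(x+1)=\int_0^x\frac{\lambda e^{-\lambda t}}{1-e^{-\lambda x}}\bigl(M_{\lambda}(t)+M_{\lambda}(x-t)\bigr)\,dt+1$. $M_\lambda(x)$ is the expected number of unit intervals at saturation in the parking process on $(0,x)$ with truncated exponential left-endpoint density. $M_\lambda$ is differentiable on $(2,\infty)$, which is the range where the derivatives in the claim are evaluated. *)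

From Stdlib Require Import Reals.
From Coquelicot Require Import Coquelicot.
Open Scope R_scope.

Definition is_M_lambda (lam : R) (M : R -> R) : Prop :=
  (forall x, 0 <= x <= 1 -> M x = 0) /\
  (forall x, 0 < x ->
     M (x + 1) =
       RInt (fun t => lam * exp (- (lam * t)) / (1 - exp (- (lam * x)))
                        * (M t + M (x - t))) 0 x + 1).

Definition deriv_values (M : R -> R) (a b : R) : R -> Prop :=
  fun d => exists t, a <= t <= b /\ is_derive M t d.

From Stdlib Require Import Reals Lra.
From Coquelicot Require Import Coquelicot.
Open Scope R_scope.

(* With N(x) = int_0^x lam e^(-lam t) M(t) dt and P(x) = int_0^x lam e^(lam t) M(t) dt,
   reflecting t |-> x - t in half of the recursion integral gives
   M(x+1) = 1 + (N(x) + e^(-lam x) P(x)) / (1 - e^(-lam x)).  Hence M is continuous on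
   (1, oo) by induction on x, differentiable on (2, oo), and M'(x+1) = K(x) / Phi(x) with
   K(x) = M(x) (e^(lam x) - e^(-lam x)) - P(x) - N(x) and
   Phi(x) = (e^(lam x) - 2 + e^(-lam x)) / lam, where K' = M' Phi' and Phi' > 0.
   So M'(t) is a Cauchy quotient: if m <= M' on [x-1, x], then K - m Phi is nondecreasing
   on [x-1, t-1] and nonnegative at x-1 (as M'(x) >= m), whence M'(t) >= m for t in
   [x, x+1]; upper bounds propagate the same way. *)

Lemma exp_neg_lt_1 (u : R) : 0 < u -> exp (- u) < 1.
Proof. intros hu. rewrite <- exp_0. apply exp_increasing. lra. Qed.

Lemma exp_eq_inv_exp_opp (u : R) : exp u = / exp (- u).
Proof. rewrite exp_Ropp, Rinv_inv. reflexivity. Qed.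

Lemma locally_between (a b x : R) : a < x < b -> locally x (fun z => a < z < b).
Proof. intros hx. apply (locally_interval _ x a b); simpl; [lra | lra | auto]. Qed.

Lemma is_RInt_comp_reflect (f : R -> R) (a b l : R) :
  is_RInt f a b l -> is_RInt (fun t => f (a + b - t)) a b l.
Proof.
  intros hf.
  assert (hba : is_RInt f (-1 * a + (a + b)) (-1 * b + (a + b)) (- l)).
  { replace (-1 * a + (a + b)) with b by ring. replace (-1 * b + (a + b)) with a by ring.
    exact (is_RInt_swap f b a l hf). }
  apply is_RInt_comp_lin, is_RInt_opp in hba.
  replace l with (opp (- l)) by (apply Ropp_involutive).
  refine (is_RInt_ext _ _ a b _ _ hba).
  intros t _. change (- (-1 * f (-1 * t + (a + b))) = f (a + b - t)).
  replace (-1 * t + (a + b)) with (a + b - t) by ring. ring.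
Qed.

Lemma nondecreasing_of_is_derive_nonneg (V dV : R -> R) (a b : R) :
  a <= b ->
  (forall c, a <= c <= b -> continuous V c) ->
  (forall c, a < c < b -> is_derive V c (dV c)) ->
  (forall c, a < c < b -> 0 <= dV c) ->
  V a <= V b.
Proof.
  intros hab hV hdV hpos.
  (* MVT_gen may pick an endpoint, where [dV] is not controlled. *)
  destruct (MVT_gen V a b (fun c => Rmax 0 (dV c))) as [c [_ hmvt]];
    rewrite ?Rmin_left, ?Rmax_right in * by lra.
  - intros c hc. rewrite Rmax_right by (apply hpos, hc). apply hdV, hc.
  - intros c hc. apply continuity_pt_filterlim, hV, hc.
  - pose proof (Rmax_l 0 (dV c)). nra.
Qed.

Lemma ratio_ge_of_is_derive_ratio_ge (f g r dg : R -> R) (a b m : R) :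
  a <= b -> 0 < g b ->
  (forall c, a <= c <= b -> continuous f c /\ continuous g c) ->
  (forall c, a < c < b -> is_derive g c (dg c) /\ 0 <= dg c) ->
  (forall c, a < c < b -> is_derive f c (r c * dg c) /\ m <= r c) ->
  m * g a <= f a ->
  m <= f b / g b.
Proof.
  intros hab hgb hcont hg hf ha.
  assert (hV : f a - m * g a <= f b - m * g b).
  { apply (nondecreasing_of_is_derive_nonneg (fun z => f z - m * g z)
             (fun c => (r c - m) * dg c)); [exact hab| | |].
    - intros c hc. destruct (hcont c hc) as [hfc hgc].
      apply (@continuous_minus R_UniformSpace R_AbsRing R_NormedModule); [exact hfc|].
      apply (@continuous_scal_r R_UniformSpace R_AbsRing R_NormedModule); exact hgc.
    - intros c hc. destruct (hg c hc) as [hgc _]. destruct (hf c hc) as [hfc _].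
      replace ((r c - m) * dg c) with (r c * dg c - m * dg c) by ring.
      apply (is_derive_minus f (fun z => m * g z)); [exact hfc | apply is_derive_scal, hgc].
    - intros c hc. destruct (hg c hc) as [_ hdg]. destruct (hf c hc) as [_ hr].
      apply Rmult_le_pos; lra. }
  apply Rmult_le_reg_r with (g b); [exact hgb|].
  unfold Rdiv. rewrite Rmult_assoc, Rinv_l by lra. lra.
Qed.

Lemma Glb_Rbar_le_of_lbounds (E1 E2 : R -> Prop) :
  (forall m, (forall d, E1 d -> m <= d) -> forall d, E2 d -> m <= d) ->
  Rbar_le (Glb_Rbar E1) (Glb_Rbar E2).
Proof.
  intros htr. destruct (Glb_Rbar_correct E1) as [hlb1 _].
  apply (Glb_Rbar_correct E2). intros d hd.
  destruct (Glb_Rbar E1) as [m | | ]; simpl; [| | exact I].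
  - apply (htr m); [intros d' hd'; exact (hlb1 d' hd') | exact hd].
  - enough (d + 1 <= d) by lra.
    apply (htr (d + 1)); [intros d' hd'; destruct (hlb1 d' hd') | exact hd].
Qed.

Lemma Lub_Rbar_le_of_ubounds (E1 E2 : R -> Prop) :
  (forall m, (forall d, E1 d -> d <= m) -> forall d, E2 d -> d <= m) ->
  Rbar_le (Lub_Rbar E2) (Lub_Rbar E1).
Proof.
  intros htr. destruct (Lub_Rbar_correct E1) as [hub1 _].
  apply (Lub_Rbar_correct E2). intros d hd.
  destruct (Lub_Rbar E1) as [m | | ]; simpl; [| exact I |].
  - apply (htr m); [intros d' hd'; exact (hub1 d' hd') | exact hd].
  - enough (d <= d - 1) by lra.
    apply (htr (d - 1)); [intros d' hd'; destruct (hub1 d' hd') | exact hd].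
Qed.

Lemma Glb_Rbar_le_Lub_Rbar (E : R -> Prop) (d : R) :
  E d -> Rbar_le (Glb_Rbar E) (Lub_Rbar E).
Proof.
  intros hd. apply Rbar_le_trans with (Finite d).
  - exact (proj1 (Glb_Rbar_correct E) d hd).
  - exact (proj1 (Lub_Rbar_correct E) d hd).
Qed.

Section MLambda.

Variables (lam : R) (M : R -> R).
Hypothesis hlam : 0 < lam.
Hypothesis hM : is_M_lambda lam M.

Definition Mint (g : R -> R) (z : R) : R := RInt (fun t => g t * M t) 0 z.
Definition wneg (t : R) : R := lam * exp (- (lam * t)).
Definition wpos (t : R) : R := lam * exp (lam * t).
Definition Nint : R -> R := Mint wneg.
Definition Pint : R -> R := Mint wpos.

Definition M_succ_rhs (z : R) : R :=
  1 + (Nint z + exp (- (lam * z)) * Pint z) / (1 - exp (- (lam * z))).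

Lemma continuous_wneg (t : R) : continuous wneg t.
Proof. apply (@ex_derive_continuous R_AbsRing R_NormedModule). unfold wneg. auto_derive. auto. Qed.

Lemma continuous_wpos (t : R) : continuous wpos t.
Proof. apply (@ex_derive_continuous R_AbsRing R_NormedModule). unfold wpos. auto_derive. auto. Qed.

Lemma M_eq_1 (y : R) : 1 < y <= 2 -> M y = 1.
Proof.
  intros hy. destruct hM as [hM01 hrec].
  replace y with ((y - 1) + 1) by ring.
  rewrite (hrec (y - 1)) by lra.
  rewrite (RInt_ext _ (fun _ => 0)), RInt_const.
  - change ((y - 1 - 0) * 0 + 1 = 1). ring.
  - intros t ht. rewrite Rmin_left, Rmax_right in ht by lra.
    rewrite (hM01 t), (hM01 (y - 1 - t)) by lra. lra.
Qed.

Lemma ex_RInt_mul_M (g : R -> R) (z : R) :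
  (forall t, continuous g t) -> 0 <= z -> (forall y, 2 <= y <= z -> continuous M y) ->
  ex_RInt (fun t => g t * M t) 0 z.
Proof.
  intros hg hz hMc.
  assert (h02 : ex_RInt (fun t => g t * M t) 0 2).
  { apply (ex_RInt_Chasles _ 0 1 2).
    - apply (ex_RInt_ext (fun _ => 0)); [|apply ex_RInt_const].
      intros t ht. rewrite Rmin_left, Rmax_right in ht by lra.
      rewrite (proj1 hM t) by lra. lra.
    - apply (ex_RInt_ext g).
      2: { apply (@ex_RInt_continuous R_CompleteNormedModule). intros; apply hg. }
      intros t ht. rewrite Rmin_left, Rmax_right in ht by lra.
      rewrite M_eq_1 by lra. lra. }
  destruct (Rle_dec z 2) as [hz2 | hz2].
  - apply (@ex_RInt_Chasles_1 R_CompleteNormedModule _ 0 z 2); [lra | exact h02].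
  - apply (ex_RInt_Chasles _ 0 2 z); [exact h02|].
    apply (@ex_RInt_continuous R_CompleteNormedModule). intros y hy.
    rewrite Rmin_left, Rmax_right in hy by lra.
    apply (continuous_mult g M); [apply hg | apply hMc; lra].
Qed.

Lemma M_succ_eq (x : R) :
  0 < x -> (forall y, 2 <= y <= x -> continuous M y) -> M (x + 1) = M_succ_rhs x.
Proof.
  intros hx hMc. rewrite (proj2 hM x hx).
  set (E := exp (- (lam * x))).
  assert (hE : E < 1) by (apply exp_neg_lt_1, Rmult_lt_0_compat; lra).
  assert (hN := RInt_correct _ _ _ (ex_RInt_mul_M _ x continuous_wneg ltac:(lra) hMc)).
  assert (hP := RInt_correct _ _ _ (ex_RInt_mul_M _ x continuous_wpos ltac:(lra) hMc)).
  apply (is_RInt_scal _ _ _ E), is_RInt_comp_reflect in hP.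
  assert (hI : is_RInt (fun t => lam * exp (- (lam * t)) / (1 - E) * (M t + M (x - t))) 0 x
                (/ (1 - E) * (Nint x + E * Pint x))).
  { refine (is_RInt_ext _ _ _ _ _ _
              (is_RInt_scal _ _ _ (/ (1 - E)) _ (is_RInt_plus _ _ _ _ _ _ hN hP))).
    intros t _. unfold wneg, wpos.
    change (/ (1 - E) * (lam * exp (- (lam * t)) * M t
                         + E * (lam * exp (lam * (0 + x - t)) * M (0 + x - t)))
            = lam * exp (- (lam * t)) / (1 - E) * (M t + M (x - t))).
    replace (0 + x - t) with (x - t) by ring.
    replace (exp (- (lam * t))) with (E * exp (lam * (x - t)))
      by (unfold E; rewrite <- exp_plus; f_equal; ring).
    field. lra. }
  rewrite (is_RInt_unique _ _ _ _ hI). unfold M_succ_rhs. fold E. field. lra.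
Qed.

Lemma continuous_Mint (g : R -> R) (n x : R) :
  (forall t, continuous g t) -> (forall y, 1 < y < n -> continuous M y) -> 0 < x < n ->
  continuous (Mint g) x.
Proof.
  intros hg hMc hx. apply (continuous_RInt_1 (fun t => g t * M t) 0 x).
  apply (filter_imp (fun z => 0 < z < n)); [|exact (locally_between 0 n x hx)].
  intros z hz. apply (@RInt_correct R_CompleteNormedModule).
  apply ex_RInt_mul_M; [exact hg | lra | intros y hy; apply hMc; lra].
Qed.

Lemma continuous_M_succ_rhs (n x : R) :
  (forall y, 1 < y < n -> continuous M y) -> 0 < x < n -> continuous M_succ_rhs x.
Proof.
  intros hMc hx.
  assert (hE : continuous (fun z => exp (- (lam * z))) x).
  { apply (@ex_derive_continuous R_AbsRing R_NormedModule). auto_derive. auto. }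
  apply (continuous_plus (fun _ => 1)); [apply continuous_const|].
  apply (continuous_mult (fun z => Nint z + exp (- (lam * z)) * Pint z)).
  - apply (continuous_plus Nint); [apply (continuous_Mint _ n); auto using continuous_wneg|].
    apply (continuous_mult (fun z => exp (- (lam * z)))); [exact hE|].
    apply (continuous_Mint _ n); auto using continuous_wpos.
  - apply (continuous_Rinv_comp (fun z => 1 - exp (- (lam * z)))).
    + apply (continuous_minus (fun _ => 1)); [apply continuous_const | exact hE].
    + enough (exp (- (lam * x)) < 1) by lra.
      apply exp_neg_lt_1, Rmult_lt_0_compat; lra.
Qed.

Lemma continuous_M_extend (n : R) :
  (forall y, 1 < y < n -> continuous M y) -> forall y, 1 < y < n + 1 -> continuous M y.
Proof.
  intros hMc y hy.
  assert (hshift : continuous (fun z => M (z + 1)) (y - 1)).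
  { apply (continuous_ext_loc _ M_succ_rhs).
    - apply (filter_imp (fun z => 0 < z < n)); [|apply locally_between; lra].
      intros z hz. symmetry. apply M_succ_eq; [lra | intros w hw; apply hMc; lra].
    - apply (continuous_M_succ_rhs n); [exact hMc | lra]. }
  apply (continuous_ext (fun z => M (z - 1 + 1))); [intros z; f_equal; ring|].
  apply (continuous_comp (fun z => z - 1) (fun z => M (z + 1))); [|exact hshift].
  apply (@ex_derive_continuous R_AbsRing R_NormedModule). auto_derive. auto.
Qed.

Lemma continuous_M (y : R) : 1 < y -> continuous M y.
Proof.
  intros hy. destruct (INR_unbounded y) as [k hk].
  enough (hk' : forall y, 1 < y < INR k -> continuous M y) by (apply hk'; lra).
  clear y hy hk. induction k as [|k IH].
  - simpl. intros y hy. lra.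
  - rewrite S_INR. apply continuous_M_extend, IH.
Qed.

Definition deriv_num (z : R) : R :=
  M z * (exp (lam * z) - exp (- (lam * z))) - Pint z - Nint z.
Definition deriv_den (z : R) : R := (exp (lam * z) - 2 + exp (- (lam * z))) / lam.

Lemma is_derive_Mint (g : R -> R) (x : R) :
  (forall t, continuous g t) -> 1 < x -> is_derive (Mint g) x (g x * M x).
Proof.
  intros hg hx. apply (is_derive_RInt (fun t => g t * M t) (Mint g) 0 x).
  - apply (filter_imp (fun z => 0 < z < x + 1)); [|apply locally_between; lra].
    intros z hz. apply (@RInt_correct R_CompleteNormedModule), ex_RInt_mul_M;
      [exact hg | lra | intros y hy; apply continuous_M; lra].
  - apply (continuous_mult g M); [apply hg | apply continuous_M, hx].
Qed.


Lemma deriv_den_pos (x : R) : 0 < x -> 0 < deriv_den x.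
Proof.
  intros hx. unfold deriv_den. rewrite (exp_eq_inv_exp_opp (lam * x)).
  assert (hE1 : exp (- (lam * x)) < 1) by (apply exp_neg_lt_1, Rmult_lt_0_compat; lra).
  assert (hE0 := exp_pos (- (lam * x))).
  set (E := exp (- (lam * x))) in *.
  replace ((/ E - 2 + E) / lam) with ((1 - E) * (1 - E) / (E * lam)) by (field; lra).
  apply Rdiv_lt_0_compat; nra.
Qed.

Lemma is_derive_M_succ_rhs (x : R) : 1 < x -> is_derive M_succ_rhs x (deriv_num x / deriv_den x).
Proof.
  intros hx.
  assert (hN : is_derive Nint x (wneg x * M x)) by exact (is_derive_Mint wneg x continuous_wneg hx).
  assert (hP : is_derive Pint x (wpos x * M x)) by exact (is_derive_Mint wpos x continuous_wpos hx).
  assert (hE1 : exp (- (lam * x)) < 1) by (apply exp_neg_lt_1, Rmult_lt_0_compat; lra).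
  unfold M_succ_rhs. auto_derive.
  - repeat split; [eexists; exact hN | eexists; exact hP | lra].
  - replace (Derive (fun z => Nint z) x) with (wneg x * M x)
      by (symmetry; apply is_derive_unique, hN).
    replace (Derive (fun z => Pint z) x) with (wpos x * M x)
      by (symmetry; apply is_derive_unique, hP).
    unfold deriv_num, deriv_den, wneg, wpos. rewrite (exp_eq_inv_exp_opp (lam * x)).
    assert (hE0 := exp_pos (- (lam * x))).
    set (E := exp (- (lam * x))) in *.
    field. repeat split; apply Rgt_not_eq; nra.
Qed.

Lemma is_derive_M_succ (x : R) : 1 < x -> is_derive M (x + 1) (deriv_num x / deriv_den x).
Proof.
  intros hx. apply (is_derive_ext_loc (fun y => M_succ_rhs (y - 1))).
  - apply (filter_imp (fun y => 2 < y < x + 2)); [|apply locally_between; lra].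
    intros y hy. replace y with (y - 1 + 1) at 2 by ring.
    symmetry. apply M_succ_eq; [lra | intros w hw; apply continuous_M; lra].
  - rewrite <- (Rmult_1_l (deriv_num x / deriv_den x)).
    apply (is_derive_comp M_succ_rhs (fun y => y - 1)).
    + replace (x + 1 - 1) with x by ring. apply is_derive_M_succ_rhs, hx.
    + auto_derive; [exact I | ring].
Qed.

Lemma is_derive_deriv_den (x : R) :
  is_derive deriv_den x (exp (lam * x) - exp (- (lam * x))).
Proof. unfold deriv_den. auto_derive; [exact I | field; lra]. Qed.

Lemma is_derive_deriv_num (x d : R) :
  1 < x -> is_derive M x d ->
  is_derive deriv_num x (d * (exp (lam * x) - exp (- (lam * x)))).
Proof.
  intros hx hd.
  assert (hN : is_derive Nint x (wneg x * M x)) by exact (is_derive_Mint wneg x continuous_wneg hx).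
  assert (hP : is_derive Pint x (wpos x * M x)) by exact (is_derive_Mint wpos x continuous_wpos hx).
  unfold deriv_num. auto_derive.
  - repeat split; [eexists; exact hd | eexists; exact hP | eexists; exact hN].
  - replace (Derive (fun z => M z) x) with d by (symmetry; apply is_derive_unique, hd).
    replace (Derive (fun z => Nint z) x) with (wneg x * M x)
      by (symmetry; apply is_derive_unique, hN).
    replace (Derive (fun z => Pint z) x) with (wpos x * M x)
      by (symmetry; apply is_derive_unique, hP).
    unfold wneg, wpos. ring.
Qed.

Lemma continuous_deriv_num (x : R) : 1 < x -> continuous deriv_num x.
Proof.
  intros hx.
  assert (hN : ex_derive Nint x) by (eexists; exact (is_derive_Mint wneg x continuous_wneg hx)).
  assert (hP : ex_derive Pint x) by (eexists; exact (is_derive_Mint wpos x continuous_wpos hx)).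
  apply (continuous_minus (fun z => M z * (exp (lam * z) - exp (- (lam * z))) - Pint z) Nint);
    [| exact (ex_derive_continuous _ _ hN)].
  apply (continuous_minus _ Pint); [| exact (ex_derive_continuous _ _ hP)].
  apply (continuous_mult M); [apply continuous_M, hx|].
  apply (@ex_derive_continuous R_AbsRing R_NormedModule). auto_derive. exact I.
Qed.

(* The factor [sg] lets the same lemma propagate upper bounds ([sg = -1]). *)
Lemma deriv_values_lbound_succ (sg m x : R) :
  3 <= x ->
  (forall d, deriv_values M (x - 1) x d -> m <= sg * d) ->
  forall d, deriv_values M x (x + 1) d -> m <= sg * d.
Proof.
  intros hx hlb d [t [ht hd]].
  assert (hder : forall c, 2 < c -> is_derive M c (deriv_num (c - 1) / deriv_den (c - 1))).
  { intros c hc. replace c with (c - 1 + 1) at 1 by ring. apply is_derive_M_succ. lra. }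
  assert (hden : 0 < deriv_den (t - 1)) by (apply deriv_den_pos; lra).
  rewrite <- (is_derive_unique _ _ _ hd), (is_derive_unique _ _ _ (hder t ltac:(lra))).
  replace (sg * (deriv_num (t - 1) / deriv_den (t - 1)))
    with (sg * deriv_num (t - 1) / deriv_den (t - 1)) by (field; lra).
  apply (ratio_ge_of_is_derive_ratio_ge (fun z => sg * deriv_num z) deriv_den
           (fun c => sg * Derive M c) (fun c => exp (lam * c) - exp (- (lam * c)))
           (x - 1) (t - 1) m);
    [lra | exact hden | | | |].
  - intros c hc. split.
    + apply (continuous_scal_r sg deriv_num), continuous_deriv_num. lra.
    + apply (@ex_derive_continuous R_AbsRing R_NormedModule).
      eexists. apply is_derive_deriv_den.
  - intros c hc. split; [apply is_derive_deriv_den|].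
    enough (exp (- (lam * c)) < exp (lam * c)) by lra.
    apply exp_increasing. nra.
  - intros c hc.
    assert (hc' : is_derive M c (Derive M c)) by (apply Derive_correct; eexists; apply hder; lra).
    split.
    + rewrite Rmult_assoc. apply is_derive_scal, is_derive_deriv_num; [lra | exact hc'].
    + apply hlb. exists c. split; [lra | exact hc'].
  - assert (hden1 : 0 < deriv_den (x - 1)) by (apply deriv_den_pos; lra).
    assert (h : m <= sg * (deriv_num (x - 1) / deriv_den (x - 1))).
    { apply hlb. exists x. split; [lra | apply hder; lra]. }
    apply (Rmult_le_compat_r (deriv_den (x - 1))) in h; [|lra].
    replace (sg * (deriv_num (x - 1) / deriv_den (x - 1)) * deriv_den (x - 1))
      with (sg * deriv_num (x - 1)) in h by (field; lra).
    exact h.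
Qed.

End MLambda.

Theorem mainTheorem9 (lam : R) (M : R -> R) (hlam : 0 < lam)
  (hM : is_M_lambda lam M) (x : R) (hx : 3 <= x) :
  Rbar_le (Glb_Rbar (deriv_values M (x - 1) x)) (Glb_Rbar (deriv_values M x (x + 1))) /\
  Rbar_le (Glb_Rbar (deriv_values M x (x + 1))) (Lub_Rbar (deriv_values M x (x + 1))) /\
  Rbar_le (Lub_Rbar (deriv_values M x (x + 1))) (Lub_Rbar (deriv_values M (x - 1) x)).
Proof.
  assert (hder : is_derive M x (deriv_num lam M (x - 1) / deriv_den lam (x - 1))).
  { replace x with (x - 1 + 1) at 1 by ring.
    apply is_derive_M_succ; [exact hlam | exact hM | lra]. }
  split; [|split].
  - apply Glb_Rbar_le_of_lbounds. intros m hm d hd.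
    rewrite <- (Rmult_1_l d). revert d hd.
    apply (deriv_values_lbound_succ lam M hlam hM 1 m x hx).
    intros d hd. rewrite Rmult_1_l. exact (hm d hd).
  - eapply Glb_Rbar_le_Lub_Rbar. exists x. split; [lra | exact hder].
  - apply Lub_Rbar_le_of_ubounds. intros m hm d hd.
    enough (- m <= -1 * d) by lra. revert d hd.
    apply (deriv_values_lbound_succ lam M hlam hM (-1) (- m) x hx).
    intros d hd. specialize (hm d hd). lra.
Qed.
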